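(* A parking function $(T,p)$ on a rooted tree $T$ with vertex set $[n]$ is prime if and only if every edge of $T$ is used by $p$.
   Context: $T$ is a rooted tree on vertex set $[n]$ with edges oriented towards the root. For $p\in[n]^n$, drivers $1,\dots,n$ arrive in order; driver $i$ parks at $p_i$ if unoccupied, otherwise follows the directed path towards the root and parks at the first unoccupied vertex, leaving if none exists. $(T,p)$ is a parking function if all drivers park. $T_v$ denotes the set of vertices $w$ with a directed path from $w$ to $v$ (including $v$). A parking function is prime if $|T_v|<|\{i:p_i\in T_v\}|$ for every non-root vertex $v$. An edge is used by $p$ if some driver, after failing to park at her preferred vertex, crosses it during her search for an unoccupied vertex. *)

From mathcomp Require Import all_boot.
Set Implicit Arguments. Unset Strict Implicit. Unset Printing Implicit Defensive.

(* A rooted tree with edges oriented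
   towards the root r is given by a parent map par : 'I_n -> 'I_n; the edges
   are v -> par v for v != r.  The tree condition: every vertex reaches the
   root by iterating par (n iterations suffice), which forces par r = r and
   acyclicity. *)
Definition is_rooted_tree (n : nat) (par : 'I_n -> 'I_n) (r : 'I_n) : Prop :=
  forall v : 'I_n, iter n par v = r.

(* The directed path from v to the root (with the root possibly repeated). *)
Definition root_path n (par : 'I_n -> 'I_n) (v : 'I_n) : seq 'I_n :=
  traject par v n.

(* State of the parking process: occupied vertices, used edges (an edge
   v -> par v is identified with its tail v), and whether every driver so far
   has parked. *)
Record pstate (n : nat) := PState {
  occ : {set 'I_n}; used : {set 'I_n}; allparked : bool }.

(* One driver with preferred vertex v arrives. She walks along the path
   v, par v, ..., r and parks at the first unoccupied vertex (index k); the
   edges she crosses are those leaving the vertices strictly before index k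
   (non-root).  If no vertex is free, she crosses all edges to the root and
   leaves. *)
Definition park_step n (par : 'I_n -> 'I_n) (r : 'I_n) (st : pstate n)
    (v : 'I_n) : pstate n :=
  let s := root_path par v in
  let k := find (fun w => w \notin occ st) s in
  let crossed := [set u in take k s | u != r] in
  if k < size s then
    PState (nth v s k |: occ st) (used st :|: crossed) (allparked st)
  else PState (occ st) (used st :|: crossed) false.

Definition run_parking n (par : 'I_n -> 'I_n) (r : 'I_n) (p : 'I_n -> 'I_n)
    : pstate n :=
  foldl (park_step par r) (PState set0 set0 true) [seq p i | i <- enum 'I_n].

Definition is_parking_function n (par : 'I_n -> 'I_n) (r : 'I_n)
    (p : 'I_n -> 'I_n) : Prop :=
  allparked (run_parking par r p).

Definition subtree n (par : 'I_n -> 'I_n) (v : 'I_n) : {set 'I_n} :=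
  [set w | [exists k : 'I_n, iter k par w == v]].

Definition is_prime_pf n (par : 'I_n -> 'I_n) (r : 'I_n) (p : 'I_n -> 'I_n)
    : Prop :=
  forall v : 'I_n, v != r ->
    #|subtree par v| < #|[set i : 'I_n | p i \in subtree par v]|.

Definition all_edges_used n (par : 'I_n -> 'I_n) (r : 'I_n) (p : 'I_n -> 'I_n)
    : Prop :=
  forall v : 'I_n, v != r -> v \in used (run_parking par r p).

(* For a non-root vertex v, every driver who prefers a vertex of T_v walks
   towards the root through v, so she either parks in T_v or crosses the edge
   v -> par v; drivers preferring a vertex outside T_v never enter T_v.
   Hence #{i | p_i in T_v} = #(drivers parked in T_v) + #(crossings of v).
   When p is a parking function every vertex ends up occupied, so the first
   summand is |T_v|, and the inequality defining primality at v says exactly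
   that the edge v -> par v is crossed at least once. *)

From mathcomp Require Import all_boot.

Set Implicit Arguments. Unset Strict Implicit. Unset Printing Implicit Defensive.

Lemma count_enum_card (T : finType) (P : pred T) :
  count P (enum T) = #|[set x | P x]|.
Proof. by rewrite enumT cardsE cardE /enum_mem size_filter. Qed.

Section ParkStep.

Variables (n : nat) (par : 'I_n -> 'I_n) (r : 'I_n).

Definition stop_index (st : pstate n) (u : 'I_n) : nat :=
  find (fun w => w \notin occ st) (root_path par u).

Lemma size_root_path (u : 'I_n) : size (root_path par u) = n.
Proof. exact: size_traject. Qed.

Lemma stop_index_free st u :
  stop_index st u < n -> nth u (root_path par u) (stop_index st u) \notin occ st.
Proof.
move=> hk; apply: (nth_find u (a := fun w => w \notin occ st)).
by rewrite has_find size_root_path.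
Qed.

Lemma card_occ_park_step st u (A : {set 'I_n}) :
  #|occ (park_step par r st u) :&: A| =
    #|occ st :&: A|
    + ((stop_index st u < n) && (nth u (root_path par u) (stop_index st u) \in A)).
Proof.
rewrite /park_step -/(stop_index st u) size_root_path.
case: ifP => hk //=; last by rewrite addn0.
set w := nth _ _ _; have wfree : w \notin occ st by exact: stop_index_free.
rewrite setIUl; case: (boolP (w \in A)) => wA /=.
  rewrite (setIidPl _) ?sub1set // cardsU1 inE (negbTE wfree) /=.
  by rewrite addnC.
have -> : [set w] :&: A = set0.
  by apply/setP => x; rewrite !inE; case: eqP => // ->; exact/negbTE.
by rewrite set0U addn0.
Qed.

Lemma used_park_step st u :
  used (park_step par r st u) =
    used st :|: [set w in take (stop_index st u) (root_path par u) | w != r].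
Proof. by rewrite /park_step; case: ifP. Qed.

Lemma allparked_park_step st u :
  allparked (park_step par r st u) = allparked st && (stop_index st u < n).
Proof.
rewrite /park_step -/(stop_index st u) size_root_path.
by case: ifP => hk; rewrite ?andbT ?andbF.
Qed.

Lemma allparked_foldl_park_step st l :
  allparked (foldl (park_step par r) st l) -> allparked st.
Proof.
elim: l st => [|u l IHl] st //= /IHl.
by rewrite allparked_park_step => /andP[].
Qed.

Lemma card_occ_foldl_park_step st l :
  allparked (foldl (park_step par r) st l) ->
  #|occ (foldl (park_step par r) st l)| = #|occ st| + size l.
Proof.
elim: l st => [|u l IHl] st /=; first by rewrite addn0.
move=> parked; rewrite IHl // addnS -addSn -(setIT (occ _)).
have /allparked_foldl_park_step := parked.
rewrite allparked_park_step => /andP[_ hk].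
by rewrite card_occ_park_step hk inE setIT addn1.
Qed.

End ParkStep.

Section RootedTree.

Variables (n : nat) (par : 'I_n -> 'I_n) (r : 'I_n).
Hypothesis tree : is_rooted_tree par r.

Lemma par_root : par r = r.
Proof. by rewrite -{1}(tree r) -iterS iterSr tree. Qed.

Lemma iter_root k : iter k par r = r.
Proof. by elim: k => // k IHk; rewrite iterS IHk par_root. Qed.

Lemma iter_geq_root K w : n <= K -> iter K par w = r.
Proof. by move=> hK; rewrite -(subnK hK) iterD tree iter_root. Qed.

Lemma iter_ltn_of_neq_root K v w : v != r -> iter K par w = v -> K < n.
Proof.
move=> hv hK; rewrite ltnNge; apply: contra hv => hn.
by rewrite -hK iter_geq_root.
Qed.

Lemma iter_neq_cycle K v : v != r -> iter K.+1 par v != v.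
Proof.
move=> hv; apply: contraNneq hv => cyc.
have iter_mul m : iter (m * K.+1) par v = v.
  by elim: m => // m IHm; rewrite mulSn iterD IHm cyc.
by rewrite -(iter_mul n) iter_geq_root // leq_pmulr.
Qed.

Lemma subtreeP v w :
  v != r -> reflect (exists K, iter K par w = v) (w \in subtree par v).
Proof.
move=> hv; rewrite inE; apply: (iffP existsP) => [[k /eqP]|[K hK]]; first by exists k.
by exists (Ordinal (iter_ltn_of_neq_root hv hK)); apply/eqP.
Qed.

Lemma root_path_notin_subtree u v x :
  v != r -> u \notin subtree par v -> x \in root_path par u ->
  x \notin subtree par v.
Proof.
move=> hv hu /trajectP[i _ ->]; apply: contra hu => /(subtreeP _ hv)[K hK].
by apply/(subtreeP _ hv); exists (K + i); rewrite iterD.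
Qed.

Lemma index_root_path_subtree u v :
  v != r -> u \in subtree par v ->
  index v (root_path par u) < n /\ iter (index v (root_path par u)) par u = v.
Proof.
move=> hv /(subtreeP _ hv)[K hK].
have hKn := iter_ltn_of_neq_root hv hK.
have vs : v \in root_path par u by apply/trajectP; exists K.
have hj : index v (root_path par u) < n.
  by rewrite -[X in _ < X](size_root_path par u) index_mem.
by split => //; rewrite -(nth_traject _ hj) nth_index.
Qed.

Lemma nth_root_path_subtree u v i :
  v != r -> u \in subtree par v -> i < n ->
  (nth u (root_path par u) i \in subtree par v) = (i <= index v (root_path par u)).
Proof.
move=> hv hu hi; have [hj iter_j] := index_root_path_subtree hv hu.
set j := index v _ in hj iter_j *; rewrite nth_traject //.
apply/(subtreeP _ hv)/idP => [[K hK]|hij]; last first.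
  by exists (j - i); rewrite -iterD subnK.
rewrite leqNgt; apply/negP => hji; set d := i - j.+1.
have /negP[] := iter_neq_cycle (K + d) hv.
by rewrite -addnS iterD -{2}hK -(subnKC hji) addSnnS [j + _]addnC iterD iter_j.
Qed.

Lemma park_or_cross_subtree u v k :
  v != r -> k <= n ->
  ((k < n) && (nth u (root_path par u) k \in subtree par v))
    + (v \in take k (root_path par u)) = (u \in subtree par v).
Proof.
move=> hv hk; have vT : v \in subtree par v by apply/(subtreeP _ hv); exists 0.
case: (boolP (u \in subtree par v)) => hu; last first.
  have outside := root_path_notin_subtree hv hu.
  have -> : (v \in take k (root_path par u)) = false.
    by apply/negP => /mem_take/outside; rewrite vT.
  case: ltnP => //= hkn.
  by rewrite (negbTE (outside _ _)) // mem_nth ?size_root_path.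
have [hj _] := index_root_path_subtree hv hu.
rewrite in_take_leq ?size_root_path //.
case: ltnP => hkn /=; last by rewrite (leq_trans hj hkn).
by rewrite nth_root_path_subtree //; case: leqP.
Qed.

Lemma park_step_subtree st u v :
  v != r ->
  exists b : bool,
    #|occ (park_step par r st u) :&: subtree par v| + b
      = #|occ st :&: subtree par v| + (u \in subtree par v)
    /\ (v \in used (park_step par r st u)) = (v \in used st) || b.
Proof.
move=> hv; exists (v \in take (stop_index par st u) (root_path par u)).
rewrite used_park_step card_occ_park_step in_setU inE hv andbT -addnA.
rewrite park_or_cross_subtree //.
by rewrite -[X in _ <= X](size_root_path par u) find_size.
Qed.

Lemma foldl_park_step_subtree st l v :
  v != r ->
  exists c,
    #|occ (foldl (park_step par r) st l) :&: subtree par v| + c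
      = #|occ st :&: subtree par v| + count (mem (subtree par v)) l
    /\ (v \in used (foldl (park_step par r) st l)) = (v \in used st) || (0 < c).
Proof.
move=> hv; elim: l st => [|u l IHl] st /=; first by exists 0; rewrite !addn0 orbF.
have [b [card_b used_b]] := park_step_subtree st u hv.
have [c [card_c used_c]] := IHl (park_step par r st u).
exists (c + b); split; first by rewrite addnA card_c addnAC card_b addnA.
by rewrite used_c used_b -orbA addn_gt0 lt0b [b || _]orbC.
Qed.

End RootedTree.

Theorem corollary2p5 (n : nat) (par : 'I_n -> 'I_n) (r : 'I_n)
    (p : 'I_n -> 'I_n) :
  is_rooted_tree par r ->
  is_parking_function par r p ->
  (is_prime_pf par r p <-> all_edges_used par r p).
Proof.
move=> tree parked.
have occ_full : occ (run_parking par r p) = setT.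
  apply/eqP; rewrite eqEcard subsetT cardsT card_ord.
  by rewrite /= card_occ_foldl_park_step // cards0 size_map size_enum_ord.
have used_iff v : v != r ->
    (v \in used (run_parking par r p))
      = (#|subtree par v| < #|[set i | p i \in subtree par v]|).
  move=> hv; have [c [card_c used_c]] :=
    foldl_park_step_subtree tree (PState set0 set0 true) [seq p i | i <- enum 'I_n] hv.
  move: card_c; rewrite -/(run_parking par r p) occ_full setTI /= set0I cards0.
  rewrite add0n count_map count_enum_card => <-.
  by rewrite used_c inE -{1}[#|_|]addn0 ltn_add2l.
by split => H v hv; [rewrite used_iff // H | rewrite -used_iff // H].
Qed.
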